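(* Let $G$ be an additive group, let $X$ be a complete non-Archimedean normed space over a field $K$ with a non-trivial non-Archimedean valuation $|\cdot|$, and let $k$ be a fixed integer with $k\neq 0,\pm1$. For $f:G\to X$ put $$Df(x,y)=f(x+ky)+f(x-ky)-k^2f(x+y)-k^2f(x-y)-2(1-k^2)f(x).$$ Let $\varphi:G\times G\to[0,\infty)$, and for $u\in G$ write $$\Phi(u)=\max\{|2(k^2-1)|\varphi(u,u),\ |k^2|\varphi(2u,u),\ \varphi(u,2u),\ \varphi((k+1)u,u),\ \varphi((k-1)u,u),\ \varphi(u,u),\ |k^2|\varphi(2u,2u),\ |2(k^2-1)|\varphi(u,2u),\ \varphi(u,3u),\ \varphi((2k+1)u,u),\ \varphi((2k-1)u,u)\}.$$ Suppose that $$\lim_{n\to\infty}\frac{1}{|8^n|}\max\{\varphi(2^{n+1}x,2^{n+1}y),\ |2|\varphi(2^nx,2^ny)\}=0,\qquad \lim_{n\to\infty}\frac{1}{|8^nk^2(k^2-1)|}\Phi(2^{n-1}x)=0$$ for all $x,y\in G$, and that for each $x\in G$ the limit $$\tilde{\varphi}_C(x):=\lim_{n\to\infty}\max\Big\{\frac{1}{|8^i|}\Phi(2^{i-1}x):\ 0\le i<n\Big\}$$ exists. Suppose that $f:G\to X$ is an odd function satisfying $\|Df(x,y)\|\le\varphi(x,y)$ for all $x,y\in G$. Then there exists a cubic function $C:G\to X$ such that $$\|f(2x)-2f(x)-C(x)\|\le\frac{1}{|8k^2(k^2-1)|}\tilde{\varphi}_C(x)\qquad(x\in G).$$ Moreover,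 if $$\lim_{i\to\infty}\lim_{n\to\infty}\max\Big\{\frac{1}{|8^j|}\Phi(2^{j-1}x):\ i\le j<n+i\Big\}=0,$$ then $C$ is the unique cubic function satisfying this inequality.
   Context: A non-Archimedean norm satisfies $\|x\|=0\iff x=0$, $\|rx\|=|r|\|x\|$ and $\|x+y\|\le\max\{\|x\|,\|y\|\}$. In the proof, $h(x)=f(2x)-2f(x)$ and $C(x)=\lim_{n\to\infty}h(2^nx)/8^n$. *)

From HB Require Import structures.
From mathcomp Require Import all_boot all_order all_algebra.
From mathcomp Require Import all_classical all_reals all_analysis.
Set Implicit Arguments. Unset Strict Implicit. Unset Printing Implicit Defensive.
Import Order.TTheory GRing.Theory Num.Theory.
Local Open Scope ring_scope.

Definition nonarch_valuation (K : fieldType) (R : realType) (abs : K -> R) : Prop :=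
  [/\ (forall a, 0 <= abs a),
      (forall a, abs a = 0 <-> a = 0),
      (forall a b, abs (a * b) = abs a * abs b)
    & (forall a b, abs (a + b) <= Num.max (abs a) (abs b))].

Definition nontrivial_valuation (K : fieldType) (R : realType) (abs : K -> R) : Prop :=
  exists a : K, abs a <> 0 /\ abs a <> 1.

Definition nonarch_norm (K : fieldType) (R : realType) (abs : K -> R)
  (X : lmodType K) (nrm : X -> R) : Prop :=
  [/\ (forall x, 0 <= nrm x),
      (forall x, nrm x = 0 <-> x = 0),
      (forall (r : K) x, nrm (r *: x) = abs r * nrm x)
    & (forall x y, nrm (x + y) <= Num.max (nrm x) (nrm y))].

Definition norm_complete (R : realType) (X : zmodType) (nrm : X -> R) : Prop :=
  forall u : nat -> X,
    (forall e : R, 0 < e -> exists N : nat, forall m n : nat,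
        (N <= m)%N -> (N <= n)%N -> nrm (u m - u n) < e) ->
    exists l : X, forall e : R, 0 < e -> exists N : nat, forall n : nat,
        (N <= n)%N -> nrm (u n - l) < e.

Definition Dk (G X : zmodType) (k : int) (f : G -> X) (x y : G) : X :=
  f (x + y *~ k) + f (x - y *~ k) - f (x + y) *~ (k ^+ 2) - f (x - y) *~ (k ^+ 2)
  - f x *~ (2 * (1 - k ^+ 2)).

Definition cubic (G X : zmodType) (C : G -> X) : Prop :=
  forall x y : G, C (x *+ 2 + y) + C (x *+ 2 - y)
                  = C (x + y) *+ 2 + C (x - y) *+ 2 + C x *+ 12.

Definition Phi (G : zmodType) (K : fieldType) (R : realType) (abs : K -> R)
  (k : int) (phi : G -> G -> R) (u : G) : R :=
  let c1 := abs ((2 * (k ^+ 2 - 1))%:~R) in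
  let c2 := abs ((k ^+ 2)%:~R) in
  Num.max (c1 * phi u u)
  (Num.max (c2 * phi (u *+ 2) u)
  (Num.max (phi u (u *+ 2))
  (Num.max (phi (u *~ (k + 1)) u)
  (Num.max (phi (u *~ (k - 1)) u)
  (Num.max (phi u u)
  (Num.max (c2 * phi (u *+ 2) (u *+ 2))
  (Num.max (c1 * phi u (u *+ 2))
  (Num.max (phi u (u *+ 3))
  (Num.max (phi (u *~ (2 * k + 1)) u)
           (phi (u *~ (2 * k - 1)) u)))))))))).

Definition PhiMax (G : zmodType) (K : fieldType) (R : realType) (abs : K -> R)
  (k : int) (phi : G -> G -> R) (x : G) (i n : nat) : R :=
  \big[Num.max/0]_(i <= j < n + i)
     (Phi abs k phi (x *+ (2 ^ j)) / abs ((8 : K) ^+ j)).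

From HB Require Import structures.
From mathcomp Require Import all_boot all_order all_algebra.
From mathcomp Require Import all_classical all_reals all_analysis.
From mathcomp Require Import ring lra zify.
Import Order.TTheory GRing.Theory Num.Theory numFieldNormedType.Exports.
Local Open Scope classical_set_scope.
Local Open Scope ring_scope.

(* With h(x) = f(2x) - 2f(x), an integer combination of nine instances of Df,
   taken at multiples of u, equals k^2 (k^2 - 1) (h(2u) - 8h(u)); hence
   |h(2u) - 8h(u)| <= Phi(u) / |k^2 (k^2 - 1)|.  By the ultrametric inequality
   the sequence h(2^n x) / 8^n is then Cauchy, and its limit C is odd, satisfies
   C(2x) = 8C(x) and, since Dh(x,y) = Df(2x,2y) - 2Df(x,y), also DC = 0.
   Finite differences of DC = 0 in suitable directions kill all but one term of
   D, so fourth differences of C vanish for certain steps; combining these steps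
   (and halving them via C(2x) = 8C(x)) gives vanishing fourth differences with
   unit steps, which for an odd C is the cubic equation.  Uniqueness: two
   solutions are both 8-homogeneous, so their difference at x is 8^-n times
   their difference at 2^n x, which is bounded by a tail of the defining
   maximum of phi~_C. *)

(* To prove identities with integer coefficients in a zmodType [V] by [ring],
   embed [V] into the commutative ring [int * V] with product
   [(a, u) * (b, v) = (a b, a v + b u)], i.e. the ring [int ⊕ V] with [V V = 0]. *)
Section IntDual.
Variable V : zmodType.

Definition int_dual := (int * V)%type.
HB.instance Definition _ := GRing.Zmodule.on int_dual.

Definition int_dual_mul (a b : int_dual) : int_dual :=
  (a.1 * b.1, b.2 *~ a.1 + a.2 *~ b.1).
Definition int_dual_one : int_dual := (1, 0).

Lemma int_dual_mulA : associative int_dual_mul.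
Proof.
move=> [a u] [b v] [c w]; rewrite /int_dual_mul /=; congr pair; first by rewrite mulrA.
by rewrite !mulrzDl !mulrzA [w *~ b *~ a]mulrzAC [v *~ c *~ a]mulrzAC addrA.
Qed.

Lemma int_dual_mulC : commutative int_dual_mul.
Proof. by move=> [a u] [b v]; rewrite /int_dual_mul /= mulrC addrC. Qed.

Lemma int_dual_mul1 : left_id int_dual_one int_dual_mul.
Proof. by move=> [a u]; rewrite /int_dual_mul /= mul1r mul0rz addr0 mulr1z. Qed.

Lemma int_dual_mulDl : left_distributive int_dual_mul +%R.
Proof.
move=> [a u] [b v] [c w]; rewrite /int_dual_mul /=; congr pair; first by rewrite mulrDl.
by rewrite mulrzDr mulrzDl addrACA.
Qed.

Lemma int_dual_one_neq0 : int_dual_one != 0. Proof. by []. Qed.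

HB.instance Definition _ := GRing.Zmodule_isComNzRing.Build int_dual
  int_dual_mulA int_dual_mulC int_dual_mul1 int_dual_mulDl int_dual_one_neq0.

Definition dual_of (v : V) : int_dual := (0, v).

Lemma dual_of_inj : injective dual_of. Proof. by move=> a b [->]. Qed.
Lemma dual_of0 : dual_of 0 = 0. Proof. by []. Qed.
Lemma dual_ofD a b : dual_of (a + b) = dual_of a + dual_of b.
Proof. by rewrite /dual_of; congr pair; rewrite addr0. Qed.
Lemma dual_ofN a : dual_of (- a) = - dual_of a.
Proof. by rewrite /dual_of; congr pair; rewrite oppr0. Qed.
Lemma dual_ofB a b : dual_of (a - b) = dual_of a - dual_of b.
Proof. by rewrite dual_ofD dual_ofN. Qed.

Lemma int_dual_natr (m : nat) : (m%:R : int_dual) = (m%:R, 0).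
Proof. by elim: m => [//|m IH]; rewrite -addn1 !natrD IH /=; congr pair; rewrite addr0. Qed.

Lemma int_dual_intr (n : int) : (n%:~R : int_dual) = (n, 0).
Proof.
case: n => m; first by rewrite -pmulrn int_dual_natr natz.
by rewrite NegzE intrN -pmulrn int_dual_natr /= natz; congr pair; rewrite oppr0.
Qed.

Lemma dual_ofMz a (n : int) : dual_of (a *~ n) = n%:~R * dual_of a.
Proof.
by rewrite int_dual_intr /dual_of /GRing.mul /= /int_dual_mul /= mulr0 mul0rz addr0.
Qed.

Lemma dual_ofMn a n : dual_of (a *+ n) = n%:R * dual_of a.
Proof. by rewrite pmulrn dual_ofMz. Qed.
End IntDual.

Ltac zmod_ring :=
  apply: dual_of_inj;
  rewrite ?(dual_ofD, dual_ofB, dual_ofN, dual_ofMz, dual_ofMn, dual_of0); ring.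


Section OddHomogeneous.
Context {G : zmodType} {K : fieldType} {X : lmodType K}.
Implicit Types (g : G -> X).

Lemma mulrz_eq0K (v : X) (n : int) : n%:~R != 0 :> K -> v *~ n = 0 -> v = 0.
Proof.
by move=> n0; rewrite -scaler_int => /eqP; rewrite scaler_eq0 (negbTE n0) => /eqP.
Qed.

Lemma mulrn2_eq0 (v : X) : (2 : K) != 0 -> (v *+ 2 == 0) = (v == 0).
Proof. by move=> n2; rewrite -scaler_nat scaler_eq0 (negbTE n2). Qed.

Lemma odd_fun0 {g} : (2 : K) != 0 -> (forall x, g (- x) = - g x) -> g 0 = 0.
Proof.
move=> n2 g_odd; apply/eqP; rewrite -(mulrn2_eq0 _ n2) mulr2n -{1}oppr0 g_odd.
by rewrite addNr.
Qed.

Lemma cubic_double {C : G -> X} :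
  (2 : K) != 0 -> cubic C -> forall u, C (u *+ 2) = C u *+ 8.
Proof.
move=> n2 C_cubic u; have := C_cubic u 0; rewrite !addr0 !subr0 => E.
apply/eqP; rewrite -subr_eq0 -(mulrn2_eq0 _ n2); apply/eqP.
have -> : (C (u *+ 2) - C u *+ 8) *+ 2 =
          (C (u *+ 2) + C (u *+ 2)) - (C u *+ 2 + C u *+ 2 + C u *+ 12) by zmod_ring.
by rewrite E subrr.
Qed.

Lemma double_pow {g : G -> X} :
  (forall u, g (u *+ 2) = g u *+ 8) -> forall n x, g (x *+ 2 ^ n) = 8 ^+ n *: g x.
Proof.
move=> g_double; elim=> [|n IH] x; first by rewrite expn0 mulr1n expr0 scale1r.
by rewrite expnSr mulrnA g_double IH -scaler_nat scalerA exprSr mulrC.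
Qed.
End OddHomogeneous.
Section FourthDifference.
Context {G : zmodType} {K : fieldType} {X : lmodType K}.
Implicit Types (g : G -> X) (a b c d : int).

Definition fdiff (w : G) (g : G -> X) : G -> X := fun x => g (x + w) - g x.

Lemma fdiffC v w g : fdiff v (fdiff w g) = fdiff w (fdiff v g).
Proof. by apply/funext => x; rewrite /fdiff (addrAC x v w); zmod_ring. Qed.

Lemma fdiff0 g : fdiff 0 g = fun=> 0.
Proof. by apply/funext => x; rewrite /fdiff addr0 subrr. Qed.

Lemma fdiff_cst0 w : fdiff w (fun=> (0 : X)) = fun=> 0.
Proof. by apply/funext => x; rewrite /fdiff subrr. Qed.

Definition diff4_vanish g a b c d := forall x z1 z2 z3 z4 : G,
  fdiff (z1 *~ a) (fdiff (z2 *~ b) (fdiff (z3 *~ c) (fdiff (z4 *~ d) g))) x = 0.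

Lemma diff4_vanish12 {g a b c d} : diff4_vanish g a b c d -> diff4_vanish g b a c d.
Proof. by move=> H x z1 z2 z3 z4; rewrite fdiffC; apply: H. Qed.

Lemma diff4_vanish23 {g a b c d} : diff4_vanish g a b c d -> diff4_vanish g a c b d.
Proof. by move=> H x z1 z2 z3 z4; rewrite [fdiff (z2 *~ c) _]fdiffC; apply: H. Qed.

Lemma diff4_vanish34 {g a b c d} : diff4_vanish g a b c d -> diff4_vanish g a b d c.
Proof. by move=> H x z1 z2 z3 z4; rewrite [fdiff (z3 *~ d) _]fdiffC; apply: H. Qed.

Lemma diff4_vanishN1 {g a b c d} : diff4_vanish g a b c d -> diff4_vanish g (- a) b c d.
Proof. by move=> H x z1 z2 z3 z4; rewrite mulrNz -mulNrz; apply: H. Qed.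

Lemma diff4_vanishN2 {g a b c d} : diff4_vanish g a b c d -> diff4_vanish g a (- b) c d.
Proof. by move=> /diff4_vanish12 /diff4_vanishN1 /diff4_vanish12. Qed.

Lemma diff4_vanishN4 {g a b c d} : diff4_vanish g a b c d -> diff4_vanish g a b c (- d).
Proof.
by move=> /diff4_vanish34 /diff4_vanish23 /diff4_vanish12 /diff4_vanishN1
          /diff4_vanish12 /diff4_vanish23 /diff4_vanish34.
Qed.

Lemma diff4_vanishMl {g a b c d} m : diff4_vanish g a b c d -> diff4_vanish g (m * a) b c d.
Proof. by move=> H x z1 z2 z3 z4; rewrite mulrzA; apply: H. Qed.

Lemma diff4_vanishMr1 {g a b c d} m : diff4_vanish g a b c d -> diff4_vanish g (a * m) b c d.
Proof. by rewrite mulrC; apply: diff4_vanishMl. Qed.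

Lemma diff4_vanishMr2 {g a b c d} m : diff4_vanish g a b c d -> diff4_vanish g a (b * m) c d.
Proof. by move=> /diff4_vanish12 /(diff4_vanishMr1 m) /diff4_vanish12. Qed.

Lemma diff4_vanishMr3 {g a b c d} m : diff4_vanish g a b c d -> diff4_vanish g a b (c * m) d.
Proof. by move=> /diff4_vanish23 /(diff4_vanishMr2 m) /diff4_vanish23. Qed.

Lemma diff4_vanishMr4 {g a b c d} m : diff4_vanish g a b c d -> diff4_vanish g a b c (d * m).
Proof. by move=> /diff4_vanish34 /(diff4_vanishMr3 m) /diff4_vanish34. Qed.

(* [fdiff ((a - a') z) r x = fdiff (a z) r y - fdiff (a' z) r y] with [y = x - a' z]. *)
Lemma diff4_vanishB1 {g a a' b c d} :
  diff4_vanish g a b c d -> diff4_vanish g a' b c d -> diff4_vanish g (a - a') b c d.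
Proof.
move=> H H' x z1 z2 z3 z4; set r := fdiff (z2 *~ b) _.
have -> : fdiff (z1 *~ (a - a')) r x =
    fdiff (z1 *~ a) r (x - z1 *~ a') - fdiff (z1 *~ a') r (x - z1 *~ a').
  by rewrite /fdiff subrK mulrzBr (addrC (z1 *~ a)) addrA; zmod_ring.
by rewrite H H' subrr.
Qed.

Lemma diff4_vanishB2 {g a b b' c d} :
  diff4_vanish g a b c d -> diff4_vanish g a b' c d -> diff4_vanish g a (b - b') c d.
Proof.
by move=> /diff4_vanish12 H /diff4_vanish12 H'; apply/diff4_vanish12/diff4_vanishB1.
Qed.

Lemma fdiff_double {g g' w} :
  (forall u, g (u *+ 2) = g' u *+ 8) ->
  forall u, fdiff (w *+ 2) g (u *+ 2) = fdiff w g' u *+ 8.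
Proof. by move=> H u; rewrite /fdiff -mulrnDl !H mulrnBl. Qed.

Lemma diff4_vanish_halve g a b c d :
  (forall u, g (u *+ 2) = g u *+ 8) -> (8 : K) != 0 ->
  diff4_vanish g (2 * a) (2 * b) (2 * c) (2 * d) -> diff4_vanish g a b c d.
Proof.
move=> g_double n8 H x z1 z2 z3 z4; have := H (x *+ 2) z1 z2 z3 z4.
have Mz2 (z : G) e : z *~ (2 * e) = z *~ e *+ 2 by rewrite mulrC mulrzA -pmulrn.
rewrite !Mz2 !(fdiff_double (fdiff_double (fdiff_double (fdiff_double g_double)))).
by move/eqP; rewrite -scaler_nat scaler_eq0 (negbTE n8) => /eqP.
Qed.

(* A Euclidean algorithm on the steps: the two vanishing conditions produced by
   [Dk k g = 0] combine into steps [1, 2k, 2, 1], then [2, 2, 2, 1]. *)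
Lemma diff4_vanish_1_2k_2_1 {g k} :
  diff4_vanish g k k 1 1 -> diff4_vanish g (k - 1) (k + 1) 2 1 ->
  diff4_vanish g 1 (2 * k) 2 1.
Proof.
move=> A B; have B' := diff4_vanish12 B.
have Akk1 : diff4_vanish g k (k * (k + 1)) 2 1.
  by have := diff4_vanishMr3 2 (diff4_vanishMr2 (k + 1) A); rewrite mul1r.
have Bkk1 : diff4_vanish g (k - 1) (k * (k + 1)) 2 1.
  by have := diff4_vanishMr2 k B; rewrite (mulrC (k + 1)).
have Akk_1 : diff4_vanish g k (k * (k - 1)) 2 1.
  by have := diff4_vanishMr3 2 (diff4_vanishMr2 (k - 1) A); rewrite mul1r.
have Bkk_1 : diff4_vanish g (k + 1) (k * (k - 1)) 2 1.
  by have := diff4_vanishMr2 k B'; rewrite (mulrC (k - 1)).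
have C1 : diff4_vanish g 1 (k * (k + 1)) 2 1.
  by have := diff4_vanishB1 Akk1 Bkk1; rewrite (_ : k - (k - 1) = 1) //; ring.
have C2 : diff4_vanish g 1 (k * (k - 1)) 2 1.
  by have := diff4_vanishB1 Bkk_1 Akk_1; rewrite (_ : k + 1 - k = 1) //; ring.
by have := diff4_vanishB2 C1 C2; rewrite (_ : k * (k + 1) - k * (k - 1) = 2 * k) //; ring.
Qed.

Lemma diff4_vanish_2_2_2_1 {g k} :
  diff4_vanish g 1 (2 * k) 2 1 -> diff4_vanish g (k - 1) (k + 1) 2 1 ->
  diff4_vanish g 2 2 2 1.
Proof.
move=> /diff4_vanish12 C B; have B' := diff4_vanish12 B.
have D1 : diff4_vanish g 2 (k + 1) 2 1.
  have E1 : diff4_vanish g (2 * k) (k + 1) 2 1.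
    by have := diff4_vanishMr2 (k + 1) C; rewrite mul1r.
  have E2 : diff4_vanish g (2 * (k - 1)) (k + 1) 2 1 by apply: diff4_vanishMl.
  by have := diff4_vanishB1 E1 E2; rewrite (_ : 2 * k - 2 * (k - 1) = 2) //; ring.
have D2 : diff4_vanish g 2 (k - 1) 2 1.
  have E1 : diff4_vanish g (2 * k) (k - 1) 2 1.
    by have := diff4_vanishMr2 (k - 1) C; rewrite mul1r.
  have E2 : diff4_vanish g (2 * (k + 1)) (k - 1) 2 1 by apply: diff4_vanishMl.
  by have := diff4_vanishB1 E2 E1; rewrite (_ : 2 * (k + 1) - 2 * k = 2) //; ring.
by have := diff4_vanishB2 D1 D2; rewrite (_ : k + 1 - (k - 1) = 2) //; ring.
Qed.

Lemma diff4_vanish_1_1_1_1 {g k} :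
  (forall u, g (u *+ 2) = g u *+ 8) -> (8 : K) != 0 ->
  diff4_vanish g k k 1 1 -> diff4_vanish g (k - 1) (k + 1) 2 1 ->
  diff4_vanish g 1 1 1 1.
Proof.
move=> g_double n8 A B; apply: diff4_vanish_halve => //.
have := diff4_vanishMr4 2 (diff4_vanish_2_2_2_1 (diff4_vanish_1_2k_2_1 A B) B).
by rewrite mulr1.
Qed.

Lemma cubic_of_diff4_vanish g :
  (2 : K) != 0 -> (forall x, g (- x) = - g x) -> (forall u, g (u *+ 2) = g u *+ 8) ->
  diff4_vanish g 1 1 1 1 -> cubic g.
Proof.
move=> n2 g_odd g_double H x y.
have g0 := odd_fun0 n2 g_odd.
have := H 0 x x y (- y).
rewrite !mulr1z /fdiff !add0r !addrK -!mulr2n !g_odd g0 !g_double subrr g0 => E.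
by apply/eqP; rewrite -subr_eq0 -oppr_eq0 -E; apply/eqP; zmod_ring.
Qed.
End FourthDifference.

Section DkElimination.
Context {G : zmodType} {K : fieldType} {X : lmodType K}.
Implicit Types (g : G -> X) (s : seq (int * int * (G -> X))).

Definition shift_comb s (x y : G) : X := \sum_(t <- s) t.2 (x + y *~ t.1.2) *~ t.1.1.

Definition shift_diff (z : G) (b : int) (t : int * int * (G -> X)) :=
  (t.1, fdiff (z *~ (t.1.2 - b)) t.2).

(* Evaluating at [(x - b z, y + z)] and subtracting the value at [(x, y)]
   replaces each [g_i] by a difference with step [(b_i - b) z]; the terms with
   [b_i = b] drop out. *)
Lemma shift_comb_diff {s} b : (forall x y, shift_comb s x y = 0) ->
  forall z x y, shift_comb (map (shift_diff z b) s) x y = 0.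
Proof.
move=> H z x y.
have <- : shift_comb s (x - z *~ b) (y + z) - shift_comb s x y =
          shift_comb (map (shift_diff z b) s) x y.
  rewrite /shift_comb big_map -sumrB; apply: eq_bigr => t _.
  rewrite /shift_diff /fdiff /= -mulrzBl; congr (_ *~ _); congr (_ - _); congr t.2.
  by rewrite mulrzDl mulrzBr; zmod_ring.
by rewrite !H subrr.
Qed.

Lemma Dk_shift_comb k g x y : Dk k g x y =
  shift_comb [:: (1, k, g); (1, - k, g); (- (k ^+ 2), 1, g); (- (k ^+ 2), -1, g);
                 (- (2 * (1 - k ^+ 2)), 0, g)] x y.
Proof.
rewrite /shift_comb !big_cons big_nil /Dk /= mulrNz mulr1z mulrN1z mulr0z addr0 !mulr1z.
by rewrite !mulrNz addr0; zmod_ring.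
Qed.

Lemma Dk0_diff4_vanish_kk11 {k g} : (forall x y, Dk k g x y = 0) ->
  (2 * (k ^+ 2 - 1))%:~R != 0 :> K -> diff4_vanish g k k 1 1.
Proof.
move=> g_sol nk; have H0 x y := etrans (esym (Dk_shift_comb k g x y)) (g_sol x y).
(* Differencing away the terms with shifts [k, -k, 1, -1] leaves the [g x] term. *)
suff : diff4_vanish g 1 (-1) k (- k).
  move=> /diff4_vanishN2 /diff4_vanishN4; rewrite !opprK.
  by move=> /diff4_vanish23 /diff4_vanish12 /diff4_vanish34 /diff4_vanish23.
move=> x z1 z2 z3 z4.
have := shift_comb_diff (-1) (shift_comb_diff 1 (shift_comb_diff (- k)
          (shift_comb_diff k H0 z4) z3) z2) z1 x 0.
rewrite /shift_comb /= !big_cons big_nil /shift_diff /= !subrr !mulr0z.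
rewrite !fdiff0 !fdiff_cst0 !mul0rz !add0r !addr0 !opprK; apply: mulrz_eq0K.
by rewrite (_ : - (2 * (1 - k ^+ 2)) = 2 * (k ^+ 2 - 1)) //; ring.
Qed.

Lemma Dk0_diff4_vanish_k2 {k g} : (forall x y, Dk k g x y = 0) ->
  (k ^+ 2)%:~R != 0 :> K -> diff4_vanish g (k - 1) (k + 1) 2 1.
Proof.
move=> g_sol nk; have H0 x y := etrans (esym (Dk_shift_comb k g x y)) (g_sol x y).
(* Differencing away the terms with shifts [k, -k, -1, 0] leaves the [g (x + y)] term. *)
suff : diff4_vanish g 1 2 (k + 1) (1 - k).
  move=> /diff4_vanishN4; rewrite (_ : - (1 - k) = k - 1); last by ring.
  by move=> /diff4_vanish34 /diff4_vanish23 /diff4_vanish12 /diff4_vanish23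
            /diff4_vanish34 /diff4_vanish23.
move=> x z1 z2 z3 z4.
have := shift_comb_diff 0 (shift_comb_diff (-1) (shift_comb_diff (- k)
          (shift_comb_diff k H0 z4) z3) z2) z1 x 0.
rewrite /shift_comb /= !big_cons big_nil /shift_diff /= !subrr !mulr0z.
rewrite !fdiff0 !fdiff_cst0 !mul0rz !add0r !addr0.
rewrite (_ : (1 - -1 : int) = 2) // (_ : 1 - - k = k + 1); last by ring.
by apply: mulrz_eq0K; rewrite intrN oppr_eq0.
Qed.

Lemma cubic_of_Dk0 k g :
  (k ^+ 2 * (k ^+ 2 - 1))%:~R != 0 :> K -> (8 : K) != 0 ->
  (forall x, g (- x) = - g x) -> (forall u, g (u *+ 2) = g u *+ 8) ->
  (forall x y, Dk k g x y = 0) -> cubic g.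
Proof.
move=> nk n8 g_odd g_double g_sol.
have n2 : (2 : K) != 0.
  apply: contraNneq n8 => n2; have -> : (8 : K) = 2 * 4 by ring.
  by rewrite n2 mul0r.
move: nk; rewrite intrM mulf_eq0 negb_or => /andP[nk2 nk21].
apply: cubic_of_diff4_vanish => //.
have nk1 : (2 * (k ^+ 2 - 1))%:~R != 0 :> K by rewrite intrM mulf_neq0.
exact: (diff4_vanish_1_1_1_1 g_double n8 (Dk0_diff4_vanish_kk11 g_sol nk1)
                                         (Dk0_diff4_vanish_k2 g_sol nk2)).
Qed.
End DkElimination.

Section DefectIdentity.
Context {G : zmodType} {K : fieldType} {X : lmodType K}.
Implicit Types (f g : G -> X) (k : int).

Definition defect f (v : G) : X := f (v *+ 2) - f v *+ 2.

Definition defect_seq f n x := (8 ^+ n)^-1 *: defect f (x *+ 2 ^ n).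

Lemma Dk_mulrn k g N x y : Dk k (fun v => g (v *+ N)) x y = Dk k g (x *+ N) (y *+ N).
Proof. by rewrite /Dk; congr (g _ + g _ - g _ *~ _ - g _ *~ _ - g _ *~ _); zmod_ring. Qed.

Lemma Dk_scale k g (r : K) (N : nat) x y :
  Dk k (fun v => r *: g (v *+ N)) x y = r *: Dk k g (x *+ N) (y *+ N).
Proof. by rewrite -Dk_mulrn /Dk !scalerBr !scalerDr !scalerMzr. Qed.

Lemma Dk_defect k f a b :
  Dk k (defect f) a b = Dk k f (a *+ 2) (b *+ 2) - Dk k f a b *+ 2.
Proof. by rewrite -Dk_mulrn /Dk /defect; zmod_ring. Qed.

Variables (k : int) (f : G -> X) (u : G).
Hypotheses (f_odd : forall x, f (- x) = - f x) (f0 : f 0 = 0).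

(* Every argument below lies in [u (Z + Z k)]; naming [f] on that lattice turns
   the identity into a linear one between finitely many values. *)
Let fk (a b : int) := f (u *~ (a + b * k)).

Let Dk_fk (a b c a1 a2 b1 b2 : int) :
  a1 = a + c -> a2 = a - c -> b1 = b + c -> b2 = b - c ->
  Dk k f (u *~ (a + b * k)) (u *~ c) =
  fk a b1 + fk a b2 - fk a1 b *~ (k ^+ 2) - fk a2 b *~ (k ^+ 2)
  - fk a b *~ (2 * (1 - k ^+ 2)).
Proof.
move=> -> -> -> ->; rewrite /Dk /fk.
by congr (f _ + f _ - f _ *~ _ - f _ *~ _ - _); zmod_ring.
Qed.

Let fkN a b a' b' : a' = - a -> b' = - b -> fk a' b' = - fk a b.
Proof. by move=> -> ->; rewrite /fk -f_odd; congr f; zmod_ring. Qed.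

Let fk00 : fk 0 0 = 0. Proof. by rewrite /fk mul0r addr0 mulr0z. Qed.

Let Dk_at (x y : G) (a b c : int) :
  x = u *~ (a + b * k) -> y = u *~ c -> Dk k f x y = Dk k f (u *~ (a + b * k)) (u *~ c).
Proof. by move=> -> ->. Qed.

Local Tactic Notation "lattice_point"
    uconstr(x) uconstr(y) uconstr(a) uconstr(b) uconstr(c) :=
  rewrite (@Dk_at x y a b c ltac:(zmod_ring) ltac:(zmod_ring)).

Lemma defect_identity :
  (defect f (u *+ 2) - defect f u *+ 8) *~ (k ^+ 2 * (k ^+ 2 - 1)) =
  Dk k f u (u *+ 3) - Dk k f (u *~ (2 * k + 1)) u + Dk k f (u *~ (2 * k - 1)) u
  - Dk k f (u *+ 2) (u *+ 2) *~ (k ^+ 2)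
  - Dk k f (u *~ (k + 1)) u *~ 2 + Dk k f (u *~ (k - 1)) u *~ 2
  + Dk k f u (u *+ 2) *~ (2 * k ^+ 2) - Dk k f (u *+ 2) u *~ (2 * k ^+ 2)
  + Dk k f u u *~ (4 * k ^+ 2 - 3).
Proof.
lattice_point u (u *+ 3) 1 0 3; lattice_point (u *~ (2 * k + 1)) u 1 2 1.
lattice_point (u *~ (2 * k - 1)) u (-1) 2 1; lattice_point (u *+ 2) (u *+ 2) 2 0 2.
lattice_point (u *~ (k + 1)) u 1 1 1; lattice_point (u *~ (k - 1)) u (-1) 1 1.
lattice_point u (u *+ 2) 1 0 2; lattice_point (u *+ 2) u 2 0 1; lattice_point u u 1 0 1.
rewrite (@Dk_fk 1 0 3 4 (-2) 3 (-3)) // (@Dk_fk 1 2 1 2 0 3 1) //.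
rewrite (@Dk_fk (-1) 2 1 0 (-2) 3 1) // (@Dk_fk 2 0 2 4 0 2 (-2)) //.
rewrite (@Dk_fk 1 1 1 2 0 2 0) // (@Dk_fk (-1) 1 1 0 (-2) 2 0) //.
rewrite (@Dk_fk 1 0 2 3 (-1) 2 (-2)) // (@Dk_fk 2 0 1 3 1 1 (-1)) //.
rewrite (@Dk_fk 1 0 1 2 0 1 (-1)) //.
rewrite (@fkN (-1) 3 1 (-3)) // (@fkN 2 0 (-2) 0) // (@fkN (-2) 2 2 (-2)) //.
rewrite (@fkN 1 0 (-1) 0) // (@fkN (-1) 2 1 (-2)) // (@fkN (-2) 1 2 (-1)) //.
rewrite (@fkN (-1) 1 1 (-1)) // fk00 /defect.
have -> : f (u *+ 2 *+ 2) = fk 4 0 by rewrite /fk; congr f; zmod_ring.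
have -> : f (u *+ 2) = fk 2 0 by rewrite /fk; congr f; zmod_ring.
have -> : f u = fk 1 0 by rewrite /fk; congr f; zmod_ring.
by zmod_ring.
Qed.
End DefectIdentity.


Lemma bigmax_nat_recr (R : realType) (F : nat -> R) m n :
  (m <= n)%N -> (forall i, 0 <= F i) ->
  \big[Num.max/0]_(m <= i < n.+1) F i = Num.max (\big[Num.max/0]_(m <= i < n) F i) (F n).
Proof.
move=> /subnKC <-; move: (n - m)%N => d F0; elim: d m => [|d IH] m.
  by rewrite addn0 big_ltn // !big_geq // (max_l (F0 _)) (max_r (F0 _)).
rewrite big_ltn ?ltnS ?leq_addr // addnS -addSn IH maxA -big_ltn //.
by rewrite addSn ltnS leq_addr.
Qed.

Lemma le_max_gt0 (R : realType) (a b : R) :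
  0 <= b -> (forall e, 0 < e -> a <= Num.max b e) -> a <= b.
Proof.
move=> b0 H; rewrite leNgt; apply/negP => ba.
have e0 : 0 < (a + b) / 2 by rewrite divr_gt0 //; lra.
by have := H _ e0; rewrite le_max => /orP[]; lra.
Qed.

Lemma cvg0_lt {R : realType} {u : nat -> R} {e : R} : u @ \oo --> 0 -> 0 < e ->
  exists N, forall n, (N <= n)%N -> u n < e.
Proof.
move=> /cvgr_dist_lt u0 e0; have [N _ HN] := u0 e e0.
by exists N => n /HN /=; rewrite sub0r normrN; apply: le_lt_trans; apply: ler_norm.
Qed.

Definition nrm_lim {R : realType} {X : zmodType} (nrm : X -> R) (a : nat -> X) l :=
  forall e, 0 < e -> exists N, forall n, (N <= n)%N -> nrm (a n - l) < e.

Section NonArchimedean.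
Context {R : realType} {K : fieldType} {abs : K -> R} {X : lmodType K} {nrm : X -> R}.
Hypotheses (abs_nonarch : nonarch_valuation abs) (nrm_nonarch : nonarch_norm abs nrm).

Lemma abs_ge0 a : 0 <= abs a. Proof. by case: abs_nonarch. Qed.
Lemma abs_eq0 a : abs a = 0 <-> a = 0. Proof. by case: abs_nonarch. Qed.
Lemma absM a b : abs (a * b) = abs a * abs b. Proof. by case: abs_nonarch. Qed.
Lemma absD a b : abs (a + b) <= Num.max (abs a) (abs b). Proof. by case: abs_nonarch. Qed.

Lemma abs_gt0 {a} : a != 0 -> 0 < abs a.
Proof. by move=> a0; rewrite lt0r abs_ge0 andbT; apply: contra a0 => /eqP /abs_eq0 ->. Qed.

Lemma abs1 : abs 1 = 1.
Proof.
have := absM 1 1; rewrite mul1r => /eqP; rewrite -subr_eq0 -{1}(mulr1 (abs 1)) -mulrBr.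
by rewrite mulf_eq0 gt_eqF ?abs_gt0 ?oner_neq0 //= subr_eq0 => /eqP.
Qed.

Lemma absN1 : abs (-1) = 1.
Proof.
have := absM (-1) (-1); rewrite mulrNN mulr1 abs1 => /esym /eqP.
by rewrite -expr2 sqrf_eq1 => /orP[/eqP //|/eqP e]; have := abs_ge0 (-1); rewrite e ler0N1.
Qed.

Lemma absN a : abs (- a) = abs a. Proof. by rewrite -mulN1r absM absN1 mul1r. Qed.

Lemma absV a : abs a^-1 = (abs a)^-1.
Proof.
have [->|a0] := eqVneq a 0; first by rewrite invr0 (proj2 (abs_eq0 0) erefl) invr0.
have nabs := lt0r_neq0 (abs_gt0 a0).
by apply: (mulfI nabs); rewrite -absM !mulfV ?abs1.
Qed.

Lemma abs_natr_le1 n : abs n%:R <= 1.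
Proof.
elim: n => [|n IH]; first by rewrite (proj2 (abs_eq0 0) erefl) ler01.
by rewrite -addn1 natrD; apply: le_trans (absD _ _) _; rewrite ge_max IH abs1 /=.
Qed.

Lemma abs_intr_le1 (n : int) : abs n%:~R <= 1.
Proof. by case: n => m; rewrite ?NegzE ?intrN ?absN -pmulrn abs_natr_le1. Qed.

Lemma nrm_ge0 x : 0 <= nrm x. Proof. by case: nrm_nonarch. Qed.
Lemma nrm_eq0 x : nrm x = 0 <-> x = 0. Proof. by case: nrm_nonarch. Qed.
Lemma nrmZ r x : nrm (r *: x) = abs r * nrm x. Proof. by case: nrm_nonarch. Qed.
Lemma nrmD x y : nrm (x + y) <= Num.max (nrm x) (nrm y). Proof. by case: nrm_nonarch. Qed.
Lemma nrm0 : nrm 0 = 0. Proof. exact/nrm_eq0. Qed.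
Lemma nrmN x : nrm (- x) = nrm x. Proof. by rewrite -scaleN1r nrmZ absN1 mul1r. Qed.
Lemma nrmB x y : nrm (x - y) = nrm (y - x). Proof. by rewrite -nrmN opprB. Qed.

Lemma nrmMz_le x (n : int) : nrm (x *~ n) <= nrm x.
Proof. by rewrite -scaler_int nrmZ ler_piMl ?nrm_ge0 ?abs_intr_le1. Qed.

Lemma nrmD_le M x y : nrm x <= M -> nrm y <= M -> nrm (x + y) <= M.
Proof. by move=> hx hy; apply: le_trans (nrmD _ _) _; rewrite ge_max hx hy. Qed.

Lemma nrmD_lt M x y : nrm x < M -> nrm y < M -> nrm (x + y) < M.
Proof. by move=> hx hy; apply: le_lt_trans (nrmD _ _) _; rewrite gt_max hx hy. Qed.

Lemma nrmB_le M x y : nrm x <= M -> nrm y <= M -> nrm (x - y) <= M.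
Proof. by move=> hx hy; apply: nrmD_le; rewrite ?nrmN. Qed.

Lemma nrm_eq0_le (x : X) : (forall e, 0 < e -> nrm x <= e) -> x = 0.
Proof.
move=> H; apply/nrm_eq0/le_anti; rewrite nrm_ge0 andbT.
by apply: le_max_gt0 => // e e0; rewrite le_max (H e e0) orbT.
Qed.

Lemma nrm_lim_uniq {a l l'} : nrm_lim nrm a l -> nrm_lim nrm a l' -> l = l'.
Proof.
move=> H H'; apply/eqP; rewrite -subr_eq0; apply/eqP/nrm_eq0_le => e e0.
have [N HN] := H e e0; have [N' HN'] := H' e e0; set n := maxn N N'.
have -> : l - l' = (a n - l') - (a n - l) by zmod_ring.
by apply/ltW/nrmD_lt; rewrite ?nrmN; [apply: HN' | apply: HN]; rewrite ?leq_maxl ?leq_maxr.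
Qed.

Lemma nrm_limD {a b l l'} :
  nrm_lim nrm a l -> nrm_lim nrm b l' -> nrm_lim nrm (fun n => a n + b n) (l + l').
Proof.
move=> H H' e e0; have [N HN] := H e e0; have [N' HN'] := H' e e0.
exists (maxn N N') => n; rewrite geq_max => /andP[nN nN'].
by rewrite opprD addrACA; apply: nrmD_lt; [apply: HN | apply: HN'].
Qed.

Lemma nrm_limN {a l} : nrm_lim nrm a l -> nrm_lim nrm (fun n => - a n) (- l).
Proof. by move=> H e /H[N HN]; exists N => n /HN; rewrite -opprD nrmN. Qed.

Lemma nrm_limB {a b l l'} :
  nrm_lim nrm a l -> nrm_lim nrm b l' -> nrm_lim nrm (fun n => a n - b n) (l - l').
Proof. by move=> H /nrm_limN; apply: nrm_limD. Qed.

Lemma nrm_limMz {a l} (m : int) : nrm_lim nrm a l -> nrm_lim nrm (fun n => a n *~ m) (l *~ m).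
Proof.
by move=> H e /H[N HN]; exists N => n /HN; rewrite -mulrzBl; apply: le_lt_trans (nrmMz_le _ _).
Qed.

Lemma nrm_limS {a l} : nrm_lim nrm a l -> nrm_lim nrm (fun n => a n.+1) l.
Proof. by move=> H e /H[N HN]; exists N => n nN; apply/HN/(leq_trans nN). Qed.

Lemma nrm_lim_ext {a b l} : a =1 b -> nrm_lim nrm a l -> nrm_lim nrm b l.
Proof. by move=> E H e /H[N HN]; exists N => n; rewrite -E; apply: HN. Qed.

Lemma ultrametric_cvg (a : nat -> X) (b : nat -> R) :
  norm_complete nrm -> b @ \oo --> 0 -> (forall n, nrm (a n.+1 - a n) <= b n) ->
  exists l, nrm_lim nrm a l.
Proof.
move=> X_complete b0 ab; apply: X_complete => e e0; have [N HN] := cvg0_lt b0 e0.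
have far n d : (N <= n)%N -> nrm (a (n + d)%N - a n) < e.
  move=> nN; elim: d => [|d IH]; first by rewrite addn0 subrr nrm0.
  have -> : a (n + d.+1)%N - a n = (a (n + d).+1 - a (n + d)%N) + (a (n + d)%N - a n).
    by rewrite addnS addrA subrK.
  by apply: nrmD_lt IH; apply: le_lt_trans (ab _) (HN _ _); rewrite (leq_trans nN) ?leq_addr.
exists N => m n mN nN; case: (leqP m n) => [mn|nm].
  by rewrite nrmB -(subnKC mn); apply: far.
by rewrite -(subnKC (ltnW nm)); apply: far.
Qed.

Section Stability.
Context {G : zmodType} {k : int} {phi : G -> G -> R} {f : G -> X}.
Hypotheses (k_nondeg : (k ^+ 2 * (k ^+ 2 - 1))%:~R != 0 :> K)
  (phi_ge0 : forall x y, 0 <= phi x y) (f_odd : forall x, f (- x) = - f x)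
  (f_approx : forall x y, nrm (Dk k f x y) <= phi x y).

Local Notation h := (defect f).
Local Notation Phik := (Phi abs k phi).
Local Notation PM := (PhiMax abs k phi).

(* [k^2 (k^2 - 1)] is even, so [k_nondeg] excludes characteristic 2. *)
Lemma two_neq0 : (2 : K) != 0.
Proof.
apply: contra k_nondeg => /eqP K2.
have k_mod2 : (k%:~R : K) = (k %% 2)%Z%:~R.
  by rewrite {1}(divz_eq k 2) intrD intrM (_ : 2%:~R = 2 :> K) // K2 mulr0 add0r.
rewrite intrM intrB !rmorphXn /= k_mod2.
have [->|->] : (k %% 2 = 0)%Z \/ (k %% 2 = 1)%Z by lia.
  by rewrite mulr0z expr0n mul0r.
by rewrite mulr1z expr1n subrr mulr0.
Qed.

Lemma eight_neq0 : (8 : K) != 0.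
Proof. by rewrite (_ : 8 = 2 * 2 * 2) ?mulf_neq0 ?two_neq0 //; ring. Qed.

Lemma abs8X_gt0 n : 0 < abs ((8 : K) ^+ n).
Proof. by rewrite abs_gt0 // expf_neq0 // eight_neq0. Qed.

Let den := abs ((8 * k ^+ 2 * (k ^+ 2 - 1))%:~R : K).

Lemma den_gt0 : 0 < den.
Proof. by rewrite abs_gt0 // -mulrA intrM mulf_neq0 // eight_neq0. Qed.

Lemma Phi_ge0 u : 0 <= Phik u.
Proof. by apply: le_trans (phi_ge0 u u) _; rewrite /Phi !le_max lexx !orbT. Qed.

Lemma Dk_le_Phi u a b (n : int) : phi a b <= Phik u -> nrm (Dk k f a b *~ n) <= Phik u.
Proof. by move=> le_phi; apply: le_trans (nrmMz_le _ _) (le_trans (f_approx a b) le_phi). Qed.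

Lemma Dk_k2_le_Phi u a b (n : int) :
  abs ((k ^+ 2)%:~R) * phi a b <= Phik u -> nrm (Dk k f a b *~ (k ^+ 2 * n)) <= Phik u.
Proof.
move=> le_phi; rewrite -scaler_int nrmZ intrM absM -mulrA; apply: le_trans le_phi.
apply: ler_wpM2l; first exact: abs_ge0.
by apply: le_trans (f_approx a b); apply: ler_piMl; [exact: nrm_ge0 | exact: abs_intr_le1].
Qed.

Lemma defect_step_le u :
  nrm (h (u *+ 2) - h u *+ 8) <= Phik u / abs ((k ^+ 2 * (k ^+ 2 - 1))%:~R).
Proof.
rewrite ler_pdivlMr ?abs_gt0 // mulrC -nrmZ scaler_int.
rewrite defect_identity // ?(odd_fun0 two_neq0 f_odd) //.
rewrite -[in Dk k f (u *+ 2) (u *+ 2) *~ _](mulr1 (k ^+ 2)) [in Dk k f (u *+ 2) u *~ _]mulrC.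
do 8 (apply: nrmD_le; last (rewrite ?nrmN; first
  [ by apply: Dk_le_Phi; rewrite /Phi !le_max lexx ?orbT
  | by apply: Dk_k2_le_Phi; rewrite /Phi !le_max lexx ?orbT
  | by apply: le_trans (f_approx _ _) _; rewrite /Phi !le_max lexx ?orbT ])).
by apply: le_trans (f_approx _ _) _; rewrite /Phi !le_max lexx ?orbT.
Qed.

Lemma defect_seq0 x : defect_seq f 0 x = h x.
Proof. by rewrite /defect_seq expr0 invr1 scale1r expn0 mulr1n. Qed.

Lemma defect_seq_step n x : defect_seq f n.+1 x - defect_seq f n x =
  (8 ^+ n.+1)^-1 *: (h (x *+ 2 ^ n *+ 2) - h (x *+ 2 ^ n) *+ 8).
Proof.
rewrite /defect_seq [in RHS]scalerBr expnSr mulrnA -scaler_nat scalerA; congr (_ - _ *: _).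
by rewrite exprSr invfM -mulrA mulVf ?mulr1 // eight_neq0.
Qed.

Lemma defect_seq_step_le n x : nrm (defect_seq f n.+1 x - defect_seq f n x) <=
  Phik (x *+ 2 ^ n) / abs (8 ^+ n.+1 * (k ^+ 2 * (k ^+ 2 - 1))%:~R).
Proof.
rewrite defect_seq_step nrmZ absV absM invfM mulrCA.
by apply: ler_wpM2l; [rewrite invr_ge0 abs_ge0 | exact: defect_step_le].
Qed.

Let PhiTerm x j := Phik (x *+ 2 ^ j) / abs ((8 : K) ^+ j).

Lemma PhiTerm_ge0 x j : 0 <= PhiTerm x j.
Proof. by rewrite divr_ge0 ?Phi_ge0 ?abs_ge0. Qed.

Lemma PhiMax0S x n : PM x 0 n.+1 = Num.max (PM x 0 n) (PhiTerm x n).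
Proof. by rewrite /PhiMax !addn0 bigmax_nat_recr //; apply: PhiTerm_ge0. Qed.

Lemma PhiMax00 x : PM x 0 0 = 0.
Proof. by rewrite /PhiMax big_geq. Qed.

Lemma PhiTerm_div n x :
  Phik (x *+ 2 ^ n) / abs (8 ^+ n.+1 * (k ^+ 2 * (k ^+ 2 - 1))%:~R) = PhiTerm x n / den.
Proof.
have -> : den = abs 8 * abs ((k ^+ 2 * (k ^+ 2 - 1))%:~R) by rewrite /den -mulrA intrM absM.
by rewrite exprSr !absM !invfM !mulrA.
Qed.

Lemma defect_seq_dist_le n x : nrm (defect_seq f n x - h x) <= PM x 0 n / den.
Proof.
have den_inv_ge0 : 0 <= den^-1 by rewrite invr_ge0 ltW ?den_gt0.
elim: n => [|n IH]; first by rewrite defect_seq0 subrr nrm0 PhiMax00 mul0r.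
have -> : defect_seq f n.+1 x - h x =
          (defect_seq f n.+1 x - defect_seq f n x) + (defect_seq f n x - h x).
  by rewrite addrA subrK.
rewrite PhiMax0S; apply: nrmD_le.
  apply: le_trans (defect_seq_step_le n x) _.
  by rewrite PhiTerm_div ler_wpM2r // le_max lexx orbT.
by apply: le_trans IH _; apply: ler_wpM2r => //; rewrite le_max lexx.
Qed.

Hypothesis X_complete : norm_complete nrm.
Hypothesis Phi_cvg0 : forall x,
  (fun n => Phik (x *+ 2 ^ n) / abs (8 ^+ n.+1 * (k ^+ 2 * (k ^+ 2 - 1))%:~R)) @ \oo --> 0.

Lemma defect_seq_lim : exists C : G -> X, forall x, nrm_lim nrm (defect_seq f ^~ x) (C x).
Proof.
have [C C_lim] : {C : G -> X & forall x, nrm_lim nrm (defect_seq f ^~ x) (C x)}.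
  apply: (@boolp.choice _ _ (fun x => nrm_lim nrm (defect_seq f ^~ x))) => x.
  exact: ultrametric_cvg X_complete (Phi_cvg0 x) (fun n => defect_seq_step_le n x).
by exists C.
Qed.

Hypothesis phi_cvg0 : forall x y,
  (fun n => Num.max (phi (x *+ 2 ^ n.+1) (y *+ 2 ^ n.+1))
                    (abs (2 : K) * phi (x *+ 2 ^ n) (y *+ 2 ^ n)) / abs (8 ^+ n)) @ \oo --> 0.
Hypothesis PhiMax_cvg : forall x, cvg ((fun n => PM x 0 n) @ \oo).

Lemma Dk_defect_seq_le n x y : nrm (Dk k (defect_seq f n) x y) <=
  Num.max (phi (x *+ 2 ^ n.+1) (y *+ 2 ^ n.+1))
          (abs (2 : K) * phi (x *+ 2 ^ n) (y *+ 2 ^ n)) / abs (8 ^+ n).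
Proof.
rewrite Dk_scale nrmZ absV Dk_defect mulrC ler_wpM2r ?invr_ge0 ?abs_ge0 //.
apply: nrmB_le; first by rewrite -!mulrnA -!expnSr le_max f_approx.
by rewrite -scaler_nat nrmZ le_max ler_wpM2l ?orbT ?abs_ge0.
Qed.

Context {C : G -> X} (C_lim : forall x, nrm_lim nrm (defect_seq f ^~ x) (C x)).

Lemma C_double u : C (u *+ 2) = C u *+ 8.
Proof.
rewrite pmulrn; apply: nrm_lim_uniq (C_lim (u *+ 2)) _.
apply: nrm_lim_ext (nrm_limMz 8 (nrm_limS (C_lim u))) => n /=.
rewrite /defect_seq -scaler_int scalerA -mulrnA -expnS; congr (_ *: _).
by rewrite exprS invfM mulrA mulfV ?mul1r // eight_neq0.
Qed.

Lemma C_odd x : C (- x) = - C x.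
Proof.
apply: nrm_lim_uniq (C_lim (- x)) _; apply: nrm_lim_ext (nrm_limN (C_lim x)) => n.
by rewrite /defect_seq mulNrn /defect mulNrn !f_odd -scalerN; congr (_ *: _); zmod_ring.
Qed.

Lemma Dk_C x y : Dk k C x y = 0.
Proof.
apply: (@nrm_lim_uniq (fun n => Dk k (defect_seq f n) x y)).
  apply: nrm_limB (nrm_limMz _ (C_lim x)); apply: nrm_limB (nrm_limMz _ (C_lim (x - y))).
  apply: nrm_limB (nrm_limMz _ (C_lim (x + y))).
  exact: nrm_limD (C_lim _) (C_lim _).
move=> e e0; have [N HN] := cvg0_lt (phi_cvg0 x y) e0.
by exists N => n /HN; rewrite subr0; apply: le_lt_trans (Dk_defect_seq_le n x y).
Qed.

Lemma C_cubic : cubic C.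
Proof. exact: cubic_of_Dk0 k_nondeg eight_neq0 C_odd C_double Dk_C. Qed.

Lemma PhiMax_le_lim x n : PM x 0 n <= lim ((fun n => PM x 0 n) @ \oo).
Proof.
have PM_mono : nondecreasing_seq (fun n => PM x 0 n).
  by apply/nondecreasing_seqP => m; rewrite PhiMax0S le_max lexx.
exact: nondecreasing_cvgn_le PM_mono (PhiMax_cvg x) n.
Qed.

Lemma C_estimate x : nrm (h x - C x) <= lim ((fun n => PM x 0 n) @ \oo) / den.
Proof.
have lim_ge0 : 0 <= lim ((fun n => PM x 0 n) @ \oo).
  by apply: le_trans (PhiMax_le_lim x 0); rewrite PhiMax00.
apply: le_max_gt0 => [|e e0]; first by rewrite divr_ge0 // ltW ?den_gt0.
have [N HN] := C_lim x e e0.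
have -> : h x - C x = (h x - defect_seq f N x) + (defect_seq f N x - C x).
  by rewrite addrA subrK.
apply: nrmD_le; rewrite le_max; apply/orP; [left | by right; apply/ltW/HN].
rewrite nrmB; apply: le_trans (defect_seq_dist_le N x) _.
by apply: ler_wpM2r; [rewrite invr_ge0 ltW ?den_gt0 | exact: PhiMax_le_lim].
Qed.

Lemma PhiMax_shift x n N : PM (x *+ 2 ^ n) 0 N = abs ((8 : K) ^+ n) * PM x n N.
Proof.
elim: N => [|N IH]; first by rewrite PhiMax00 /PhiMax add0n big_geq // mulr0.
rewrite PhiMax0S IH /PhiMax addSn bigmax_nat_recr ?leq_addl //; last first.
  by move=> i; apply: PhiTerm_ge0.
rewrite maxr_pMr ?abs_ge0 //; congr (Num.max _ _).
rewrite /PhiTerm -mulrnA -expnD addnC exprD absM invfM mulrCA.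
rewrite [abs _ * (_ / _)]mulrCA mulfV ?mulr1 //.
exact: lt0r_neq0 (abs8X_gt0 n).
Qed.

Lemma lim_PhiMax_shift x n : lim ((fun N => PM x n N) @ \oo) =
  lim ((fun N => PM (x *+ 2 ^ n) 0 N) @ \oo) / abs ((8 : K) ^+ n).
Proof.
have -> : (fun N => PM x n N) =
          (fun N => PM (x *+ 2 ^ n) 0 N / abs ((8 : K) ^+ n)).
  apply/funext => N; rewrite PhiMax_shift mulrC mulrA mulVf ?mul1r //.
  exact: lt0r_neq0 (abs8X_gt0 n).
by apply/cvg_lim; [exact: Rhausdorff | apply: cvgMr_tmp; exact: PhiMax_cvg].
Qed.

Lemma C_unique {C'} : cubic C' ->
  (forall x, nrm (h x - C' x) <= lim ((fun n => PM x 0 n) @ \oo) / den) ->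
  (forall x, (fun i => lim ((fun n => PM x i n) @ \oo)) @ \oo --> 0) ->
  C' = C.
Proof.
move=> C'_cubic C'_estimate tail0; apply/funext => x; apply/esym/eqP.
rewrite -subr_eq0; apply/eqP/nrm_eq0_le => e e0.
have C'_double := cubic_double two_neq0 C'_cubic.
have diff_le n : nrm (C x - C' x) <= lim ((fun N => PM x n N) @ \oo) / den.
  have -> : C x - C' x = (8 ^+ n)^-1 *: (C (x *+ 2 ^ n) - C' (x *+ 2 ^ n)).
    rewrite (double_pow C_double) (double_pow C'_double) -scalerBr scalerA.
    by rewrite mulVf ?scale1r // expf_neq0 // eight_neq0.
  rewrite nrmZ absV lim_PhiMax_shift [X in _ <= X]mulrAC [X in _ <= X]mulrC.
  apply: ler_wpM2l; first by rewrite invr_ge0 abs_ge0.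
  have -> : C (x *+ 2 ^ n) - C' (x *+ 2 ^ n) =
            (h (x *+ 2 ^ n) - C' (x *+ 2 ^ n)) - (h (x *+ 2 ^ n) - C (x *+ 2 ^ n)).
    by zmod_ring.
  exact: nrmB_le (C'_estimate _) (C_estimate _).
have [N HN] := cvg0_lt (tail0 x) (mulr_gt0 e0 den_gt0).
by apply: le_trans (diff_le N) _; rewrite ler_pdivrMr ?den_gt0 // ltW ?HN.
Qed.
End Stability.
End NonArchimedean.

Theorem theorem2p3 (G : zmodType) (R : realType) (K : fieldType) (abs : K -> R)
  (X : lmodType K) (nrm : X -> R) (k : int) (phi : G -> G -> R) (f : G -> X) :
  nonarch_valuation abs -> nontrivial_valuation abs ->
  nonarch_norm abs nrm -> norm_complete nrm ->
  k != 0 -> k != 1 -> k != -1 ->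
  ((k ^+ 2 * (k ^+ 2 - 1))%:~R != 0 :> K) ->
  (forall x y, 0 <= phi x y) ->
  (forall x y : G,
     (fun n : nat => Num.max (phi (x *+ (2 ^ n.+1)) (y *+ (2 ^ n.+1)))
                             (abs (2 : K) * phi (x *+ (2 ^ n)) (y *+ (2 ^ n)))
                     / abs ((8 : K) ^+ n)) @ \oo --> 0) ->
  (forall x : G,
     (fun n : nat => Phi abs k phi (x *+ (2 ^ n))
                     / abs ((8 : K) ^+ n.+1 * (k ^+ 2 * (k ^+ 2 - 1))%:~R))
       @ \oo --> 0) ->
  (forall x : G, cvg ((fun n : nat => PhiMax abs k phi x 0 n) @ \oo)) ->
  (forall x : G, f (- x) = - f x) ->
  (forall x y : G, nrm (Dk k f x y) <= phi x y) ->
  exists C : G -> X,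
    [/\ cubic C,
        (forall x : G,
           nrm (f (x *+ 2) - f x *+ 2 - C x)
             <= lim ((fun n : nat => PhiMax abs k phi x 0 n) @ \oo)
                / abs ((8 * k ^+ 2 * (k ^+ 2 - 1))%:~R))
      & ((forall x : G,
            (fun i : nat => lim ((fun n : nat => PhiMax abs k phi x i n) @ \oo))
              @ \oo --> 0) ->
         forall C' : G -> X, cubic C' ->
           (forall x : G,
              nrm (f (x *+ 2) - f x *+ 2 - C' x)
                <= lim ((fun n : nat => PhiMax abs k phi x 0 n) @ \oo)
                   / abs ((8 * k ^+ 2 * (k ^+ 2 - 1))%:~R)) ->
           C' = C)].
Proof.
move=> abs_nonarch _ nrm_nonarch X_complete _ _ _ k_nondeg phi_ge0 phi_cvg0 Phi_cvg0
  PhiMax_cvg f_odd f_approx.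
have [C C_lim] := defect_seq_lim abs_nonarch nrm_nonarch k_nondeg f_odd f_approx
                                 X_complete Phi_cvg0.
exists C; split.
- exact: (C_cubic abs_nonarch nrm_nonarch k_nondeg f_odd f_approx phi_cvg0 C_lim).
- exact: (C_estimate abs_nonarch nrm_nonarch k_nondeg phi_ge0 f_odd f_approx PhiMax_cvg C_lim).
- move=> tail0 C' C'_cubic C'_estimate.
  exact: (C_unique abs_nonarch nrm_nonarch k_nondeg phi_ge0 f_odd f_approx PhiMax_cvg C_lim
                   C'_cubic C'_estimate tail0).
Qed.
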